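(* Let $\mathbb{Y}$ be the open mono-dynamics with motor the monoid $(\mathbf{R}_+,+)$ (single object $\bullet$), clock $\bullet^{\mathbf h}=\mathbf{R}_+$ with $d^{\mathbf h}(t)=t+d$, state set $\mathbf{R}_+\times\mathbf{R}$, scansion $\tau(t,a)=t$ and transitions $d^{\mathbb{Y}}(t,a)=\{t+d\}\times[a-d,a+d]$ for $d\in\mathbf R_+$. Then the map sending a function $y\in Lip^1_+$ to the partial function $\mathfrak a_y:t\mapsto(t,y(t))$ on $D_y$ is a bijection from $Lip^1_+$ onto the set $\mathcal S_{\mathbb Y}$ of external parts of realizations of $\mathbb Y$ (the empty function corresponding to the empty realization). In particular $\mathcal S^*_{\mathbb Y}\simeq Lip^1_+\setminus\{\emptyset\}$.
   Context: For an interval $K\subset\mathbf R$, $Lip^1(K)$ is the set of $1$-Lipschitz real functions on $K$. For $c\in[0,+\infty]$, $Lip^1([0,c|)=Lip^1([0,c])\cup Lip^1([0,c[)$ (for $c=+\infty$ this is $Lip^1([0,+\infty[)$; for $c=0$ it is $Lip^1(\{0\})\cup\{\emptyset\}$), and $Lip^1_+=\bigcup_{c\in[0,+\infty]}Lip^1([0,c|)$. A realization of an open mono-dynamics $(\tau:\alpha\looparrowright\mathbf h)$ with one-object motor is a partial function $\mathfrak a$ from $st(\mathbf h)$ to the states, with domain $D$, such that $\tau(\mathfrak a(t))=t$ for $t\in D$, and for every arrow $d$ and instant $t$: if $d^{\mathbf h}(t)\in D$ then $t\in D$ and $\mathfrak a(d^{\mathbf h}(t))\in d^\alpha(\mathfrak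 a(t))$. The empty realization is the empty partial function. *)

From Stdlib Require Import Reals.
Open Scope R_scope.

(* Partial functions R -> X are represented as R -> option X;
   the domain is the set of t with a value Some _. *)
Definition pdom {X : Type} (f : R -> option X) (t : R) : Prop := f t <> None.

(* Domain of the form [0,c] (0 <= c < oo), [0,c[ (0 <= c <= oo).
   c = +oo gives [0,+oo[; c = 0 gives {0} or the empty set. *)
Definition dom_0c_bar (D : R -> Prop) : Prop :=
  (exists c, 0 <= c /\ forall t, D t <-> (0 <= t /\ t <= c)) \/
  (exists c, 0 <= c /\ forall t, D t <-> (0 <= t /\ t < c)) \/
  (forall t, D t <-> 0 <= t).

Definition lip1 (y : R -> option R) : Prop :=
  forall s t u v, y s = Some u -> y t = Some v -> Rabs (u - v) <= Rabs (s - t).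

Definition Lip1plus (y : R -> option R) : Prop :=
  dom_0c_bar (pdom y) /\ lip1 y.

Definition Ystate (s : R * R) : Prop := 0 <= fst s.
Definition Ytau (s : R * R) : R := fst s.
Definition Ytrans (d : R) (s s' : R * R) : Prop :=
  fst s' = fst s + d /\ snd s - d <= snd s' /\ snd s' <= snd s + d.

Definition Yrealization (a : R -> option (R * R)) : Prop :=
  (forall t, pdom a t -> 0 <= t) /\
  (forall t s, a t = Some s -> Ystate s /\ Ytau s = t) /\
  (forall d t, 0 <= d -> 0 <= t -> forall s', a (t + d) = Some s' ->
      exists s, a t = Some s /\ Ytrans d s s').

Definition realiz_of (y : R -> option R) : R -> option (R * R) :=
  fun t => match y t with Some v => Some (t, v) | None => None end.

Definition empty_pfun {X : Type} : R -> option X := fun _ => None.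

(* A realization of Y is forced to be t |-> (t, y t) by the scansion, and the
   transitions of length d = t - s say exactly that y is defined at s whenever
   it is defined at t >= s, with |y t - y s| <= t - s.  So the external parts
   are the 1-Lipschitz partial functions whose domain is an initial segment of
   R_+, and by completeness of R these segments are exactly [0,c], [0,c[ and
   [0,+oo[. *)
From Stdlib Require Import Reals.
From Stdlib Require Import Lra Classical FunctionalExtensionality.
Open Scope R_scope.

Definition initial_segment (D : R -> Prop) : Prop :=
  (forall t, D t -> 0 <= t) /\ (forall s t, D t -> 0 <= s <= t -> D s).

Lemma initial_segment_upper_bound (D : R -> Prop) (t : R) :
  initial_segment D -> 0 <= t -> ~ D t -> is_upper_bound D t.
Proof.
  intros [_ Hdown] Ht nDt x Dx.
  destruct (Rle_or_lt x t) as [|Htx]; [assumption|].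
  exfalso; apply nDt, (Hdown t x Dx); lra.
Qed.

Lemma initial_segment_below_lub (D : R -> Prop) (c t : R) :
  initial_segment D -> is_lub D c -> 0 <= t < c -> D t.
Proof.
  intros HD [_ Hlub] Ht; apply NNPP; intro nDt.
  pose proof (Hlub t (initial_segment_upper_bound D t HD (proj1 Ht) nDt)); lra.
Qed.

Lemma dom_0c_bar_initial_segment (D : R -> Prop) :
  dom_0c_bar D -> initial_segment D.
Proof.
  intros [[c [_ H]]|[[c [_ H]]|H]]; split; intros *; rewrite ?H; intros; lra.
Qed.

Lemma initial_segment_dom_0c_bar (D : R -> Prop) :
  initial_segment D -> dom_0c_bar D.
Proof.
  intros HD; pose proof HD as [Hpos Hdown].
  destruct (classic (exists x, D x)) as [Hne|Hempty].
  2: { right; left; exists 0; split; [lra|].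
       intro t; split; [intro Dt; exfalso; eauto | lra]. }
  destruct (classic (bound D)) as [Hb|Hnb].
  2: { right; right; intro t; split; [apply Hpos|].
       intro Ht; apply NNPP; intro nDt.
       exact (Hnb (ex_intro _ t (initial_segment_upper_bound D t HD Ht nDt))). }
  destruct (completeness D Hb Hne) as [c Hc].
  assert (Hc0 : 0 <= c).
  { destruct Hne as [x Dx]; pose proof (Hpos x Dx); pose proof (proj1 Hc x Dx); lra. }
  destruct (classic (D c)) as [Dc|nDc].
  - left; exists c; split; [exact Hc0|]; intro t; split.
    + intro Dt; split; [apply Hpos, Dt | apply (proj1 Hc), Dt].
    + intro Ht; exact (Hdown t c Dc Ht).
  - right; left; exists c; split; [exact Hc0|]; intro t; split.
    + intro Dt; split; [apply Hpos, Dt|].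
      destruct (proj1 Hc t Dt) as [|<-]; [assumption | contradiction].
    + intro Ht; exact (initial_segment_below_lub D c t HD Hc ltac:(lra)).
Qed.

Lemma Ytrans_iff (d : R) (s s' : R * R) : 0 <= d ->
  Ytrans d s s' <-> fst s' = fst s + d /\ Rabs (snd s' - snd s) <= d.
Proof.
  intros Hd; unfold Ytrans, Rabs.
  destruct (Rcase_abs (snd s' - snd s)); split; intros; lra.
Qed.

Lemma realiz_of_Some (y : R -> option R) (t : R) (s : R * R) :
  realiz_of y t = Some s <-> y t = Some (snd s) /\ fst s = t.
Proof.
  unfold realiz_of; destruct (y t), s as [t' v]; simpl; split.
  - intros [= <- <-]; auto.
  - intros [[= <-] <-]; reflexivity.
  - discriminate.
  - intros [? _]; discriminate.
Qed.

Lemma pdom_realiz_of (y : R -> option R) (t : R) :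
  pdom (realiz_of y) t <-> pdom y t.
Proof. unfold pdom, realiz_of; destruct (y t); split; congruence. Qed.

Lemma Lip1plus_Yrealization (y : R -> option R) :
  Lip1plus y -> Yrealization (realiz_of y).
Proof.
  intros [Hdom Hlip]; destruct (dom_0c_bar_initial_segment _ Hdom) as [Hpos Hdown].
  split; [|split].
  - intros t Ht; apply Hpos, pdom_realiz_of, Ht.
  - intros t s [Hy Hs]%realiz_of_Some; unfold Ystate, Ytau; rewrite Hs.
    split; [apply Hpos; unfold pdom; congruence | reflexivity].
  - intros d t Hd Ht s' [Hy Hs']%realiz_of_Some.
    assert (Hyt : pdom y t) by (apply (Hdown t (t + d)); [unfold pdom; congruence | lra]).
    destruct (y t) as [u|] eqn:Eu; [|contradiction].
    exists (t, u); split; [apply realiz_of_Some; auto|].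
    apply Ytrans_iff; [exact Hd|]; simpl; split; [exact Hs'|].
    pose proof (Hlip _ _ _ _ Hy Eu) as Hl.
    replace (t + d - t) with d in Hl by ring; rewrite (Rabs_right d) in Hl; lra.
Qed.

Lemma realiz_of_inj (y1 y2 : R -> option R) : realiz_of y1 = realiz_of y2 -> y1 = y2.
Proof.
  intros H; extensionality t; pose proof (equal_f H t) as Ht.
  unfold realiz_of in Ht; destruct (y1 t), (y2 t); congruence.
Qed.

Definition ext_part (a : R -> option (R * R)) : R -> option R :=
  fun t => option_map snd (a t).

Section Realization.

Variable a : R -> option (R * R).
Hypothesis Ha : Yrealization a.

Lemma Yrealization_fst (t : R) (s : R * R) : a t = Some s -> fst s = t.
Proof. intros Hs; apply (proj1 (proj2 Ha) t s Hs). Qed.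

Lemma Yrealization_step (s t : R) (q : R * R) : 0 <= s <= t -> a t = Some q ->
  exists p, a s = Some p /\ Rabs (snd q - snd p) <= t - s.
Proof.
  intros Hst Hq; destruct Ha as [_ [_ Htr]].
  destruct (Htr (t - s) s ltac:(lra) ltac:(lra) q) as [p [Hp Hpq]].
  { replace (s + (t - s)) with t by ring; exact Hq. }
  exists p; split; [exact Hp|]; apply Ytrans_iff in Hpq; [tauto | lra].
Qed.

Lemma realiz_of_ext_part : a = realiz_of (ext_part a).
Proof.
  extensionality t; unfold realiz_of, ext_part.
  destruct (a t) as [[t' v]|] eqn:E; [|reflexivity].
  simpl; rewrite <- (Yrealization_fst t (t', v) E); reflexivity.
Qed.

Lemma ext_part_initial_segment : initial_segment (pdom (ext_part a)).
Proof.
  assert (Hdom : forall t, pdom (ext_part a) t <-> pdom a t).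
  { intro t; unfold pdom, ext_part; destruct (a t); simpl; split; congruence. }
  split.
  - intros t Ht; apply (proj1 Ha), Hdom, Ht.
  - intros s t Ht Hs; apply Hdom in Ht; apply Hdom.
    destruct (a t) as [q|] eqn:Eq; [|contradiction].
    destruct (Yrealization_step s t q Hs Eq) as [p [Hp _]].
    unfold pdom; congruence.
Qed.

Lemma ext_part_lip1 : lip1 (ext_part a).
Proof.
  assert (Hle : forall s t u v, s <= t -> ext_part a s = Some u ->
                  ext_part a t = Some v -> Rabs (u - v) <= Rabs (s - t)).
  { unfold ext_part; intros s t u v Hst Hu Hv.
    destruct (a s) as [p|] eqn:Ep; [|discriminate].
    destruct (a t) as [q|] eqn:Eq; [|discriminate].
    injection Hu as <-; injection Hv as <-.
    assert (Hs0 : 0 <= s) by (apply (proj1 Ha); unfold pdom; congruence).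
    destruct (Yrealization_step s t q ltac:(lra) Eq) as [p' [Ep' Hpq]].
    rewrite Ep in Ep'; injection Ep' as <-.
    rewrite Rabs_minus_sym, (Rabs_left1 (s - t)) by lra; lra. }
  intros s t u v Hu Hv; destruct (Rle_or_lt s t).
  - exact (Hle s t u v ltac:(lra) Hu Hv).
  - rewrite Rabs_minus_sym, (Rabs_minus_sym s); exact (Hle t s v u ltac:(lra) Hv Hu).
Qed.

Lemma ext_part_Lip1plus : Lip1plus (ext_part a).
Proof.
  split; [apply initial_segment_dom_0c_bar, ext_part_initial_segment | apply ext_part_lip1].
Qed.

End Realization.

Lemma realiz_of_empty (y : R -> option R) : realiz_of y = empty_pfun <-> y = empty_pfun.
Proof.
  split; intros H.
  - apply realiz_of_inj; rewrite H; reflexivity.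
  - rewrite H; reflexivity.
Qed.

Theorem mainTheorem6 :
  (forall y, Lip1plus y -> Yrealization (realiz_of y)) /\
  (forall y1 y2, Lip1plus y1 -> Lip1plus y2 ->
     realiz_of y1 = realiz_of y2 -> y1 = y2) /\
  (forall a, Yrealization a -> exists y, Lip1plus y /\ a = realiz_of y) /\
  (forall y, Lip1plus y -> (realiz_of y = empty_pfun <-> y = empty_pfun)).
Proof.
  split; [exact Lip1plus_Yrealization|].
  split; [intros y1 y2 _ _; exact (realiz_of_inj y1 y2)|].
  split.
  - intros a Ha; exists (ext_part a).
    exact (conj (ext_part_Lip1plus a Ha) (realiz_of_ext_part a Ha)).
  - intros y _; exact (realiz_of_empty y).
Qed.
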